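(* Let $X$ be a Banach space and let $D,E\subseteq X^*$ be norming spaces induced by projectional skeletons in $X$. If $D\cap E$ is total (i.e. separates the points of $X$), then $D=E$.
   Context: A projectional skeleton in $X$ is a family $\mathfrak s=(P_s)_{s\in\Gamma}$ of bounded linear projections on $X$ indexed by a directed poset $\Gamma$ such that: $X=\bigcup_sP_sX$ and each $P_sX$ is separable; $s\leqslant t\Rightarrow P_s=P_s\circ P_t=P_t\circ P_s$; for $s_0<s_1<\dots$ in $\Gamma$, $t=\sup_ns_n$ exists in $\Gamma$ and $P_tX=\overline{\bigcup_nP_{s_n}X}$; and $\sup_s\|P_s\|<\infty$. The norming space induced by $\mathfrak s$ is $D(\mathfrak s)=\bigcup_{s\in\Gamma}P_s^*X^*$. *)

From HB Require Import structures.
From mathcomp Require Import all_boot all_order all_algebra.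
From mathcomp Require Import all_classical all_reals all_analysis.
Set Implicit Arguments. Unset Strict Implicit. Unset Printing Implicit Defensive.
Import Order.TTheory GRing.Theory Num.Theory.
Import numFieldNormedType.Exports.
Local Open Scope classical_set_scope.
Local Open Scope ring_scope.

Definition separable_set {T : topologicalType} (A : set T) : Prop :=
  exists S : set T, countable S /\ S `<=` A /\ A `<=` closure S.

Definition dual_elem {R : realType} {X : normedModType R} (f : X -> R^o) : Prop :=
  linear f /\ continuous f.

Definition bounded_linear_projection {R : realType} {X : normedModType R}
  (P : X -> X) : Prop :=
  linear P /\ continuous P /\ (forall x, P (P x) = P x).

Definition is_sup_seq {d : Order.disp_t} {G : porderType d} (s : nat -> G) (t : G) : Prop :=
  (forall n, (s n <= t)%O) /\ (forall u, (forall n, (s n <= u)%O) -> (t <= u)%O).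

Definition projectional_skeleton {R : realType} {X : normedModType R}
  {d : Order.disp_t} (G : porderType d) (P : G -> X -> X) : Prop :=
  (forall s t : G, exists u, (s <= u)%O /\ (t <= u)%O) /\
      (forall s, bounded_linear_projection (P s)) /\
      (forall x : X, exists s, range (P s) x) /\
      (forall s, separable_set (range (P s))) /\
      (forall s t, (s <= t)%O -> P s = P s \o P t /\ P s = P t \o P s) /\
      (forall sq : nat -> G, (forall n, (sq n < sq n.+1)%O) ->
         exists t, is_sup_seq sq t /\
           range (P t) = closure (\bigcup_n range (P (sq n)))) /\
      (exists C : R, forall s x, `|P s x| <= C * `|x|).

(* The norming space D(s) = \bigcup_s P_s^* X^* induced by the skeleton. *)
Definition induced_norming_space {R : realType} {X : normedModType R}
  {d : Order.disp_t} {G : porderType d} (P : G -> X -> X) : set (X -> R^o) :=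
  [set f | exists s : G, exists g : X -> R^o, dual_elem g /\ f = g \o P s].

Definition total_set {R : realType} {X : normedModType R} (D : set (X -> R^o)) : Prop :=
  forall x : X, (forall f, D f -> f x = 0) -> x = 0.

From HB Require Import structures.
From mathcomp Require Import all_boot all_order all_algebra.
From mathcomp Require Import all_classical all_reals all_analysis.
From Stdlib Require Import Cantor Lia.
Import Order.TTheory GRing.Theory Num.Theory.
Import numFieldNormedType.Exports.
Local Open Scope classical_set_scope.
Local Open Scope ring_scope.

(* By symmetry it suffices to show D(P1) ⊆ D(P2).  For every index s0 of the
   first skeleton we find S >= s0 and an index T of the second one with
   P1 S = P2 T; then f = g ∘ P1 s0 satisfies f = f ∘ P1 S = f ∘ P2 T, so f lies in
   D(P2).  S and T are suprema of a back-and-forth chain s_0, t_0, s_1, t_1, ...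
   whose ranges interlace (a range of one skeleton is separable, hence contained
   in a range of the other by σ-completeness), so P1 S and P2 T have the same
   range.  Along the way the chain also absorbs the stabilizing indices of
   countably many functionals of D(P1) ∩ D(P2) that detect every nonzero point of
   that range (one per ball of radius 1/(k+1) around a dense sequence); each of
   them is fixed by P1 S and P2 T, hence vanishes on P1 S x - P2 T x, which is
   therefore 0. *)

Lemma countable_range_enum {T : Type} {S : set T} :
  countable S -> S !=set0 -> exists e : nat -> T, range e = S.
Proof.
move=> /pfcard_geP[-> [//]|[e]] _; exists e.
apply/seteqP; split=> [_ [j _ <-]|x Sx]; first exact: funS.
by have [j _ <-] := @surj _ _ _ _ e x Sx; exists j.
Qed.

Lemma bigcup_interleave (T : Type) (A B : nat -> set T) :
  (forall n, A n `<=` B n) -> (forall n, B n `<=` A n.+1) ->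
  \bigcup_n A n = \bigcup_n B n.
Proof.
move=> AB BA; apply/seteqP; split=> x [n _ xn]; first by exists n => //; exact: AB.
by exists n.+1 => //; exact: BA.
Qed.

Lemma closure_bigcup_closure (T : topologicalType) (I : Type) (A C : I -> set T) :
  (forall i, A i `<=` closure (C i)) ->
  closure (\bigcup_i A i) `<=` closure (\bigcup_i C i).
Proof.
move=> AC; rewrite [X in _ `<=` X](closure_id _).1; last exact: closed_closure.
by apply: closureS => x [i _ /AC]; apply: closureS; exact: bigcup_sup.
Qed.

Lemma linear_funB (R : pzRingType) (U V : lmodType R) (f : U -> V) :
  linear f -> forall a b, f (a - b) = f a - f b.
Proof. by move=> f_lin a b; rewrite -!scaleN1r addrC f_lin addrC. Qed.

Section DirectedSequences.
Context {d : Order.disp_t} {G : porderType d}.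
Hypothesis G_directed : forall s t : G, exists u, (s <= u)%O /\ (t <= u)%O.

Lemma directed_seq_bound (v : nat -> G) :
  exists c : nat -> G, nondecreasing_seq c /\ forall n, (v n <= c n)%O.
Proof.
have [up upP] := choice (fun p : G * G => G_directed p.1 p.2).
pose c := fix c n := if n is n'.+1 then up (c n', v n) else v 0%N.
exists c; split; last by case=> //= n; exact: (upP (c n, v n.+1)).2.
by apply/nondecreasing_seqP => n; exact: (upP (c n, v n.+1)).1.
Qed.

End DirectedSequences.

Lemma nondecreasing_seq_stationary_or_strict {d : Order.disp_t} {G : porderType d}
    {c : nat -> G} : nondecreasing_seq c ->
  (exists N, forall m, (N <= m)%N -> c m = c N) \/
  exists phi : nat -> nat, (forall k, (c (phi k) < c (phi k.+1))%O) /\ forall k, (k <= phi k)%N.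
Proof.
move=> c_mono; have [|no_stat] := pselect (exists N, forall m, (N <= m)%N -> c m = c N).
  by left.
right; have jump N : exists m, (N < m)%N /\ (c N < c m)%O.
  apply: contrapT => no_jump; apply: no_stat; exists N => m Nm.
  apply: contrapT => cmN; apply: no_jump; exists m; split.
    by rewrite ltn_neqAle Nm andbT; apply: contra_notN cmN => /eqP ->.
  by rewrite lt_neqAle c_mono // andbT; apply: contra_notN cmN => /eqP ->.
have [next nextP] := choice jump.
exists (fun k => iter k next 0%N); split=> [k|]; first exact: (nextP _).2.
by elim=> //= k IHk; exact: leq_ltn_trans IHk (nextP _).1.
Qed.

Section InterleavedChains.
Context {d1 : Order.disp_t} {G1 : porderType d1} {d2 : Order.disp_t} {G2 : porderType d2}.
Hypothesis G1_directed : forall s t : G1, exists u, (s <= u)%O /\ (t <= u)%O.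
Hypothesis G2_directed : forall s t : G2, exists u, (s <= u)%O /\ (t <= u)%O.

(* Stage [n] meets the requirement [req (s m) j] with [(m, j) = Cantor.of_nat n];
   as [m <= Cantor.to_nat (m, j)], [s m] is already fixed by then, so the state
   of the recursion carries the finished prefix of [s]. *)
Lemma interleaved_chains (a : G2 -> G1) (b : G1 -> G2) (req : G1 -> nat -> G1 * G2)
    (s0 : G1) :
  exists (s : nat -> G1) (t : nat -> G2),
  [/\ nondecreasing_seq s, nondecreasing_seq t, (s0 <= s 0)%O,
      forall n, (a (t n) <= s n.+1)%O /\ (b (s n) <= t n)%O &
      forall m j, exists n, ((req (s m) j).1 <= s n)%O /\ ((req (s m) j).2 <= t n)%O].
Proof.
have [up1 up1P] := choice (fun p : G1 * G1 => G1_directed p.1 p.2).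
have [up2 up2P] := choice (fun p : G2 * G2 => G2_directed p.1 p.2).
have {}up1P x y : (x <= up1 (x, y))%O /\ (y <= up1 (x, y))%O := up1P (x, y).
have {}up2P x y : (x <= up2 (x, y))%O /\ (y <= up2 (x, y))%O := up2P (x, y).
pose rq n (st : (nat -> G1) * G2) := req (st.1 (Cantor.of_nat n).1) (Cantor.of_nat n).2.
pose next n (st : (nat -> G1) * G2) :=
  let s' := up1 (up1 (st.1 n, (rq n st).1), a st.2) in
  ((fun k => if (k <= n)%N then st.1 k else s'), up2 (up2 (st.2, (rq n st).2), b s')).
pose st := fix st n := if n is n'.+1 then next n' (st n') else (fun=> s0, b s0).
pose s n := (st n).1 n; pose t n := (st n).2.
have prefix n k : (k <= n)%N -> (st n).1 k = s k.
  elim: n k => [|n IHn] k; first by rewrite leqn0 => /eqP ->.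
  rewrite leq_eqVlt => /predU1P[->|kn]; first by rewrite /s /= ltnn.
  by rewrite /= ifT ?IHn // ltnW.
have sS n : s n.+1 = up1 (up1 (s n, (rq n (st n)).1), a (t n)) by rewrite /s /= ltnn.
have tS n : t n.+1 = up2 (up2 (t n, (rq n (st n)).2), b (s n.+1)) by rewrite sS.
exists s, t; split=> [||//|n|m j].
- by apply/nondecreasing_seqP => n; rewrite sS; exact: le_trans (up1P _ _).1 (up1P _ _).1.
- by apply/nondecreasing_seqP => n; rewrite tS; exact: le_trans (up2P _ _).1 (up2P _ _).1.
- split; first by rewrite sS; exact: (up1P _ _).2.
  by case: n => [|n]; rewrite ?tS; [exact: lexx | exact: (up2P _ _).2].
- set n := Cantor.to_nat (m, j); exists n.+1.
  have mn : (m <= n)%N.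
    by apply/ssrnat.leP; have := Cantor.to_nat_non_decreasing m j; lia.
  have rqn : rq n (st n) = req (s m) j.
    by rewrite /rq /n Cantor.cancel_of_to /= prefix.
  rewrite -rqn sS tS; split; first exact: le_trans (up1P _ _).2 (up1P _ _).1.
  exact: le_trans (up2P _ _).2 (up2P _ _).1.
Qed.
End InterleavedChains.

Section Functionals.
Variables (R : realType) (X : normedModType R).

Lemma eq_projections_of_separating (P Q : X -> X) (D : set (X -> R^o)) :
  linear P -> range P = range Q ->
  (forall f, D f -> [/\ linear f, forall x, f (P x) = f x & forall x, f (Q x) = f x]) ->
  (forall z, range P z -> (forall f, D f -> f z = 0) -> z = 0) ->
  P = Q.
Proof.
move=> P_lin PQ D_fix D_sep; apply/funext => x; apply/eqP; rewrite -subr_eq0.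
have [w _ Pw] : range P (Q x) by rewrite PQ; exists x.
apply/eqP/D_sep => [|f /D_fix[f_lin fP fQ]].
  by exists (x - w) => //; rewrite linear_funB // Pw.
by rewrite linear_funB // fP fQ subrr.
Qed.

Lemma separating_witnesses (D : set (X -> R^o)) :
  D !=set0 -> (forall f, D f -> continuous f) ->
  exists W : X -> nat -> X -> R^o, (forall q k, D (W q k)) /\
    forall (Q : set X) z, closure Q z -> (exists2 f, D f & f z != 0) ->
    exists q k, Q q /\ W q k z != 0.
Proof.
move=> [f0 Df0] D_cont.
pose nonzero_on (f : X -> R^o) (p : X * nat) := ball p.1 p.2.+1%:R^-1 `<=` [set w | f w != 0].
suff /choice[W WP] : forall p, exists w,
    D w /\ ((exists2 f, D f & nonzero_on f p) -> nonzero_on w p).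
  exists (fun q k => W (q, k)); split=> [q k|Q z Qz [f Df fz]]; first by case: (WP (q, k)).
  have [e /= e0 ze] : nbhs_ball z [set w | f w != 0].
    apply/nbhs_ballP; apply: (D_cont f Df z [set y | y != 0]).
    by apply: open_nbhs_nbhs; split; [exact: open_neq | exact: fz].
  have [k ke] : exists k : nat, k.+1%:R^-1 < e / 2.
    have [N _ /(_ N (leqnn N))] := near_infty_natSinv_lt (PosNum (divr_gt0 e0 (ltr0Sn R 1))).
    by exists N.
  have [q [Qq zq]] : exists q, Q q /\ ball z k.+1%:R^-1 q.
    by apply: Qz; apply: nbhsx_ballx; rewrite invr_gt0.
  have qf : nonzero_on f (q, k).
    move=> w qw; apply/ze/(ball_split (z := q)); [move: zq | move: qw];
    by apply: le_ball; exact: ltW.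
  have [_ /(_ (ex_intro2 _ _ f Df qf)) qW] := WP (q, k).
  by exists q, k; split=> //; apply/qW/ball_sym.
move=> p; have [[f Df fp]|none] := pselect (exists2 f, D f & nonzero_on f p).
  by exists f.
by exists f0; split=> // /none.
Qed.

End Functionals.

Section Skeleton.
Context {R : realType} {X : normedModType R} {d : Order.disp_t} {G : porderType d}
  {P : G -> X -> X}.
Hypothesis HP : projectional_skeleton P.

Lemma skeleton_directed (s t : G) : exists u, (s <= u)%O /\ (t <= u)%O.
Proof. by case: HP => + _; apply. Qed.

Lemma skeleton_projection s : bounded_linear_projection (P s).
Proof. by case: HP => _ [+ _]; apply. Qed.

Lemma skeleton_cover x : exists s, range (P s) x.
Proof. by case: HP => _ [_ [+ _]]; apply. Qed.

Lemma skeleton_separable s : separable_set (range (P s)).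
Proof. by case: HP => _ [_ [_ [+ _]]]; apply. Qed.

Lemma skeleton_comp {s t : G} : (s <= t)%O -> P s = P s \o P t /\ P s = P t \o P s.
Proof. by case: HP => _ [_ [_ [_ [+ _]]]]; apply. Qed.

Lemma skeleton_chain_sup (c : nat -> G) : (forall n, (c n < c n.+1)%O) ->
  exists t, is_sup_seq c t /\ range (P t) = closure (\bigcup_n range (P (c n))).
Proof. by case: HP => _ [_ [_ [_ [_ [+ _]]]]]; apply. Qed.

Lemma skeleton_rangeE s : range (P s) = [set x | P s x = x].
Proof.
have [_ [_ idem]] := skeleton_projection s.
by apply/seteqP; split=> [_ [x _ <-]|x Px]; [exact: idem | exists x].
Qed.

Lemma skeleton_range_closed s : closed (range (P s)).
Proof.
have [lin [cont _]] := skeleton_projection s.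
have -> : range (P s) = (fun x => P s x - x) @^-1` [set 0].
  rewrite skeleton_rangeE; apply/seteqP; split=> x /=; first by move=> ->; rewrite subrr.
  by move=> /eqP; rewrite subr_eq0 => /eqP.
apply: preimage_closed; last exact/accessible_closed_set1/hausdorff_accessible/norm_hausdorff.
by move=> x _; apply: continuousB => //; exact: cont.
Qed.

Lemma skeleton_closure_range s : closure (range (P s)) = range (P s).
Proof. exact/esym/closure_id/skeleton_range_closed. Qed.

Lemma skeleton_range_le {s t : G} : (s <= t)%O -> range (P s) `<=` range (P t).
Proof. by move=> /skeleton_comp[_ ->] _ [x _ <-]; exists (P s x). Qed.

Lemma skeleton_range_dense_seq s :
  exists e : nat -> X, range e `<=` range (P s) /\ range (P s) `<=` closure (range e).
Proof.
have [S [countS [SP PS]]] := skeleton_separable s.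
have S0 : S !=set0.
  have [y [Sy _]] := PS _ (imageT (P s) 0) _ (nbhsx_ballx (P s 0) _ ltr01).
  by exists y.
have [e eS] := countable_range_enum countS S0.
by exists e; rewrite eS.
Qed.

Lemma skeleton_seq_sup {c : nat -> G} : nondecreasing_seq c ->
  exists t, (forall n, (c n <= t)%O) /\
    range (P t) = closure (\bigcup_n range (P (c n))).
Proof.
move=> c_mono; have [[N cN]|[phi [phi_strict phi_ge]]] :=
  nondecreasing_seq_stationary_or_strict c_mono.
  have c_le n : (c n <= c N)%O.
    by case: (leqP n N) => [/c_mono //|/ltnW/cN ->].
  exists (c N); split=> //.
  have -> : \bigcup_n range (P (c n)) = range (P (c N)).
    by apply/seteqP; split=> [x [n _]|x]; [exact: skeleton_range_le | exists N].
  by rewrite skeleton_closure_range.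
have [t [[t_ub _] rangeE]] := skeleton_chain_sup (c \o phi) phi_strict.
exists t; split=> [n|]; first exact: le_trans (c_mono _ _ (phi_ge n)) (t_ub n).
rewrite rangeE; congr closure; apply/seteqP; split=> x [n _ xn].
  by exists (phi n).
by exists n => //; exact: skeleton_range_le (c_mono _ _ (phi_ge n)) _ xn.
Qed.

Lemma skeleton_range_cover_seq (e : nat -> X) : exists s, range e `<=` range (P s).
Proof.
have [v vP] := choice (fun j => skeleton_cover (e j)).
have [c [c_mono vc]] := directed_seq_bound skeleton_directed v.
have [s [cs _]] := skeleton_seq_sup c_mono.
by exists s => _ [j _ <-]; exact: skeleton_range_le (le_trans (vc j) (cs j)) _ (vP j).
Qed.

Lemma induced_dual {f : X -> R^o} : induced_norming_space P f -> dual_elem f.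
Proof.
move=> [s [g [[g_lin g_cont] ->]]]; have [s_lin [s_cont _]] := skeleton_projection s.
split; first by move=> a x y /=; rewrite s_lin g_lin.
by move=> x; apply: continuous_comp; [exact: s_cont | exact: g_cont].
Qed.

Lemma induced_norming_space0 : induced_norming_space P 0.
Proof.
have [s _] := skeleton_cover 0; exists s, 0; split=> //; split; last exact: cst_continuous.
by move=> a x y; rewrite /= scaler0 addr0.
Qed.

Lemma induced_stabilizer :
  exists u : (X -> R^o) -> G, forall f, induced_norming_space P f ->
    forall v, (u f <= v)%O -> forall x, f (P v x) = f x.
Proof.
suff /choice[u uP] : forall f : X -> R^o, exists u : G, induced_norming_space P f ->
  forall v, (u <= v)%O -> forall x, f (P v x) = f x by exists u.
move=> f; have [[s [g [_ ->]]]|notD] := pselect (induced_norming_space P f).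
  by exists s => _ v /skeleton_comp[sv _] x; rewrite /= {2}sv.
by have [s _] := skeleton_cover 0; exists s => /notD.
Qed.

End Skeleton.

Section Absorption.
Context {R : realType} {X : normedModType R}.
Context {d1 : Order.disp_t} {G1 : porderType d1} {P1 : G1 -> X -> X}.
Context {d2 : Order.disp_t} {G2 : porderType d2} {P2 : G2 -> X -> X}.
Hypotheses (HP1 : projectional_skeleton P1) (HP2 : projectional_skeleton P2).

Lemma skeleton_range_absorb t : exists s, range (P2 t) `<=` range (P1 s).
Proof.
have [e [_ dense]] := skeleton_range_dense_seq HP2 t.
have [s es] := skeleton_range_cover_seq HP1 e.
by exists s; rewrite -(skeleton_closure_range HP1); apply: subset_trans dense (closureS es).
Qed.

End Absorption.

Section CommonProjection.
Context {R : realType} {X : normedModType R}.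
Context {d1 : Order.disp_t} {G1 : porderType d1} {P1 : G1 -> X -> X}.
Context {d2 : Order.disp_t} {G2 : porderType d2} {P2 : G2 -> X -> X}.
Hypotheses (HP1 : projectional_skeleton P1) (HP2 : projectional_skeleton P2).
Local Notation D := (induced_norming_space P1 `&` induced_norming_space P2).
Hypothesis D_total : total_set D.
Context {u1 : (X -> R^o) -> G1} {u2 : (X -> R^o) -> G2}.
Hypothesis u1P : forall f, induced_norming_space P1 f ->
  forall v, (u1 f <= v)%O -> forall x, f (P1 v x) = f x.
Hypothesis u2P : forall f, induced_norming_space P2 f ->
  forall v, (u2 f <= v)%O -> forall x, f (P2 v x) = f x.
Context {W : X -> nat -> X -> R^o}.
Hypothesis W_D : forall q k, D (W q k).
Hypothesis W_sep : forall (Q : set X) z, closure Q z -> (exists2 f, D f & f z != 0) ->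
  exists q k, Q q /\ W q k z != 0.

Lemma eq_projections_at S T (Q : set X) :
  range (P1 S) = range (P2 T) -> range (P1 S) `<=` closure Q ->
  (forall q k, Q q -> (u1 (W q k) <= S)%O /\ (u2 (W q k) <= T)%O) ->
  P1 S = P2 T.
Proof.
move=> rangeST SQ QST.
pose DST := [set f | D f /\ (u1 f <= S)%O /\ (u2 f <= T)%O].
apply: (@eq_projections_of_separating _ _ _ _ DST) => //.
- by have [] := skeleton_projection HP1 S.
- move=> f [[D1f D2f] [fS fT]]; split; first by have [] := induced_dual HP1 D1f.
    exact: u1P.
  exact: u2P.
move=> z /SQ Qz z_sep; apply: contrapT => z0.
have [f Df fz] : exists2 f, D f & f z != 0.
  apply: contra_notP z0 => none; apply: D_total => f Df.
  by apply: contra_notP none => /eqP fz; exists f.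
have [q [k [Qq /eqP]]] := W_sep _ _ Qz (ex_intro2 _ _ f Df fz); apply; apply: z_sep.
by split; [exact: W_D | exact: QST].
Qed.

Lemma exists_common_projection s0 : exists S T, (s0 <= S)%O /\ P1 S = P2 T.
Proof.
have [a aP] := choice (skeleton_range_absorb HP1 HP2).
have [b bP] := choice (skeleton_range_absorb HP2 HP1).
have [e eP] := choice (skeleton_range_dense_seq HP1).
pose req s j := let w := W (e s (Cantor.of_nat j).1) (Cantor.of_nat j).2 in (u1 w, u2 w).
have [s [t [s_mono t_mono s0s st_le req_met]]] := interleaved_chains
  (skeleton_directed HP1) (skeleton_directed HP2) a b req s0.
have [S [sS rangeS]] := skeleton_seq_sup HP1 s_mono.
have [T [tT rangeT]] := skeleton_seq_sup HP2 t_mono.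
exists S, T; split; first exact: le_trans s0s (sS 0%N).
apply: (@eq_projections_at _ _ (\bigcup_m range (e (s m)))).
- rewrite rangeS rangeT (@bigcup_interleave _ (fun n => range (P1 (s n)))
    (fun n => range (P2 (t n)))) // => n /=.
    exact: subset_trans (bP _) (skeleton_range_le HP2 (st_le n).2).
  exact: subset_trans (aP _) (skeleton_range_le HP1 (st_le n).1).
- by rewrite rangeS; apply: closure_bigcup_closure => m; exact: (eP _).2.
move=> _ k [m _ [i _ <-]]; have [n []] := req_met m (Cantor.to_nat (i, k)).
rewrite /req Cantor.cancel_of_to /= => n1 n2.
by split; [exact: le_trans n1 (sS n) | exact: le_trans n2 (tT n)].
Qed.

End CommonProjection.

Lemma induced_norming_space_subset (R : realType) (X : normedModType R)
  (d1 : Order.disp_t) (G1 : porderType d1) (P1 : G1 -> X -> X)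
  (d2 : Order.disp_t) (G2 : porderType d2) (P2 : G2 -> X -> X) :
  projectional_skeleton P1 -> projectional_skeleton P2 ->
  total_set (induced_norming_space P1 `&` induced_norming_space P2) ->
  induced_norming_space P1 `<=` induced_norming_space P2.
Proof.
move=> HP1 HP2 D_total f D1f.
have [u1 u1P] := induced_stabilizer HP1.
have [u2 u2P] := induced_stabilizer HP2.
have [W [W_D W_sep]] := @separating_witnesses _ _
  (induced_norming_space P1 `&` induced_norming_space P2)
  (ex_intro _ 0 (conj (induced_norming_space0 HP1) (induced_norming_space0 HP2)))
  (fun g Dg => (induced_dual HP1 Dg.1).2).
have [S [T [fS PST]]] := exists_common_projection HP1 HP2 D_total u1P u2P W_D W_sep (u1 f).
exists T, f; split; first exact: (induced_dual HP1 D1f).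
by apply/funext => x; rewrite /= -PST (u1P _ D1f).
Qed.

Theorem corollary4p11 (R : realType) (X : completeNormedModType R)
  (d1 : Order.disp_t) (G1 : porderType d1) (P1 : G1 -> X -> X)
  (d2 : Order.disp_t) (G2 : porderType d2) (P2 : G2 -> X -> X) :
  projectional_skeleton P1 -> projectional_skeleton P2 ->
  total_set (induced_norming_space P1 `&` induced_norming_space P2) ->
  induced_norming_space P1 = induced_norming_space P2.
Proof.
move=> HP1 HP2 total; apply/seteqP; split; first exact: induced_norming_space_subset.
by apply: induced_norming_space_subset => //; rewrite setIC.
Qed.
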